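(* Let $X$ be a rearrangement invariant sequence space such that the discrete Cesàro operator $C$ is bounded on $X$. Then $CX$ is order continuous if and only if $X$ is order continuous.
   Context: A rearrangement invariant sequence space is a Banach space $X$ of real sequences with the ideal property ($|x|\le|y|$ coordinatewise, $y\in X$ imply $x\in X$, $\|x\|_X\le\|y\|_X$), containing a sequence with all coordinates nonzero, with equal norms for equimeasurable sequences. $C(x)_n=\frac1n\sum_{k=1}^nx_k$; $CX=\{x:C(|x|)\in X\}$ with $\|x\|_{CX}=\|C(|x|)\|_X$. A Banach ideal space $Y$ is order continuous if for every $y\in Y$ and every sequence $0\le y^{(n)}\le|y|$ with $y^{(n)}\downarrow0$ coordinatewise, $\|y^{(n)}\|_Y\to0$. *)

(* Real sequences are functions nat -> R
   (index 0 corresponds to index 1 of the paper). *)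
From HB Require Import structures.
From mathcomp Require Import all_boot all_order all_algebra.
From mathcomp Require Import boolp classical_sets cardinality reals.
Set Implicit Arguments. Unset Strict Implicit. Unset Printing Implicit Defensive.
Import Order.TTheory GRing.Theory Num.Theory.
Local Open Scope ring_scope.
Local Open Scope classical_set_scope.

Section Defs.
Variable R : realType.
Notation seqR := (nat -> R).

Definition is_banach_seq_space (mem : seqR -> Prop) (nrm : seqR -> R) : Prop :=
  mem (fun _ => 0) /\
      (forall x y, mem x -> mem y -> mem (fun n => x n + y n)) /\
      (forall (a : R) x, mem x -> mem (fun n => a * x n)) /\
      (forall x, mem x -> 0 <= nrm x) /\
      (forall x, mem x -> nrm x = 0 -> x = (fun _ => 0)) /\
      (forall (a : R) x, mem x -> nrm (fun n => a * x n) = `|a| * nrm x) /\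
      (forall x y, mem x -> mem y ->
         nrm (fun n => x n + y n) <= nrm x + nrm y) /\
      (forall xs : nat -> seqR, (forall k, mem (xs k)) ->
         (forall e : R, 0 < e -> exists N, forall m k, (N <= m)%N -> (N <= k)%N ->
              nrm (fun n => xs m n - xs k n) < e) ->
         exists x, mem x /\ forall e : R, 0 < e -> exists N, forall k, (N <= k)%N ->
              nrm (fun n => xs k n - x n) < e).

Definition ideal_property (mem : seqR -> Prop) (nrm : seqR -> R) : Prop :=
  forall x y, (forall n, `|x n| <= `|y n|) -> mem y -> mem x /\ nrm x <= nrm y.

Definition equimeasurable (x y : seqR) : Prop :=
  forall lam : R, 0 < lam ->
    card_eq [set n | lam < `|x n|] [set n | lam < `|y n|].

Definition ri_seq_space (mem : seqR -> Prop) (nrm : seqR -> R) : Prop :=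
  [/\ is_banach_seq_space mem nrm,
      ideal_property mem nrm,
      (exists x, mem x /\ forall n, x n != 0) &
      (forall x y, mem y -> equimeasurable x y -> mem x /\ nrm x = nrm y)].

Definition cesaro (x : seqR) : seqR :=
  fun n => (n.+1%:R)^-1 * \sum_(k < n.+1) x k.

Definition absS (x : seqR) : seqR := fun n => `|x n|.

Definition cesaro_bounded (mem : seqR -> Prop) (nrm : seqR -> R) : Prop :=
  (forall x, mem x -> mem (cesaro x)) /\
  exists K : R, forall x, mem x -> nrm (cesaro x) <= K * nrm x.

Definition CX_mem (mem : seqR -> Prop) : seqR -> Prop :=
  fun x => mem (cesaro (absS x)).
Definition CX_norm (nrm : seqR -> R) : seqR -> R :=
  fun x => nrm (cesaro (absS x)).

Definition order_continuous (mem : seqR -> Prop) (nrm : seqR -> R) : Prop :=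
  forall (y : seqR) (ys : nat -> seqR), mem y ->
    (forall k n, 0 <= ys k n /\ ys k n <= `|y n|) ->
    (forall k n, ys k.+1 n <= ys k n) ->
    (forall n (e : R), 0 < e -> exists K, forall k, (K <= k)%N -> ys k n < e) ->
    forall e : R, 0 < e -> exists K, forall k, (K <= k)%N -> nrm (ys k) < e.

End Defs.

(* If X is order continuous, so is CX: for 0 <= y_k decreasing to 0 below |y| with
   C|y| in X, the means C y_k decrease to 0 pointwise and stay below C|y|.
   Conversely, assume CX order continuous.  No constant c > 0 lies in X: otherwise
   ||c 1_[k,oo)||_CX -> 0, yet C(c 1_[k,oo)) >= c/2 on [2k,oo), and c/2 1_[2k,oo) is
   equimeasurable with the constant c/2.  As |y_n| >= e infinitely often would
   put the constant e in X, every element of X tends to 0.  Given 0 <= y_k decreasing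
   to 0 below |y| in X, the convergence is then uniform, so y_k <= c_k := sup y_k,
   with c_k decreasing to 0.  Adding |x0| for some nowhere vanishing x0 in X gives
   a strictly positive majorant g of the y_k, and a permutation p makes G := g o p
   nonincreasing; then y_k o p <= min(G, c_k) <= C(min(G, c_k)), and order
   continuity of CX applied to min(G, c_k) gives ||y_k|| = ||y_k o p|| -> 0. *)

From mathcomp Require Import all_boot all_order all_algebra.
From mathcomp Require Import finmap boolp classical_sets cardinality reals.
From mathcomp Require Import lra zify.
Set Implicit Arguments. Unset Strict Implicit. Unset Printing Implicit Defensive.
Import Order.TTheory GRing.Theory Num.Theory.
Local Open Scope ring_scope.
Local Open Scope classical_set_scope.

Section RealSequences.
Variable R : realType.
Implicit Types (f g : nat -> R) (c : R).

Definition vanishes f := forall e, 0 < e -> exists N, forall n, (N <= n)%N -> `|f n| < e.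

Definition cst_from (K : nat) c : nat -> R := fun n => if (K <= n)%N then c else 0.

Lemma nonincreasing_le f : (forall n, f n.+1 <= f n) ->
  forall m n, (m <= n)%N -> f n <= f m.
Proof.
exact: (@homo_leq _ f (fun a b => b <= a) (fun=> lexx _)
  (fun _ _ _ yx zy => le_trans zy yx)).
Qed.

Lemma cesaro_cst c n : cesaro (fun=> c) n = c.
Proof.
by rewrite /cesaro sumr_const card_ord -[c *+ _]mulr_natr mulrCA mulVf ?mulr1 ?pnatr_eq0.
Qed.

Lemma ler_cesaro f g n : (forall j, (j <= n)%N -> f j <= g j) ->
  cesaro f n <= cesaro g n.
Proof.
move=> fg; rewrite /cesaro ler_wpM2l ?invr_ge0 ?ler0n //.
by apply: ler_sum => -[j /= jn] _; apply: fg.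
Qed.

Lemma cesaro_ge0 f n : (forall j, 0 <= f j) -> 0 <= cesaro f n.
Proof. by move=> f0; rewrite -(cesaro_cst 0 n); apply: ler_cesaro. Qed.

Lemma cesaro_le_ub f c n : (forall j, (j <= n)%N -> f j <= c) -> cesaro f n <= c.
Proof. by move=> fc; rewrite -(cesaro_cst c n); apply: ler_cesaro. Qed.

Lemma nonincreasing_le_cesaro f n : (forall j, f j.+1 <= f j) -> f n <= cesaro f n.
Proof.
move=> f_noninc; rewrite -{1}(cesaro_cst (f n) n).
by apply: ler_cesaro => j /=; apply: nonincreasing_le.
Qed.

Lemma sum_cst_from K c m : \sum_(k < m) cst_from K c k = c *+ (m - K).
Proof.
elim: m => [|m IH]; first by rewrite big_ord0.
rewrite big_ord_recr /= IH /cst_from; case: leqP => [Km|mK].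
  by rewrite subSn // mulrSr.
have mK0 : (m - K = 0)%N by apply/eqP; rewrite subn_eq0 ltnW.
have mSK0 : (m.+1 - K = 0)%N by apply/eqP; rewrite subn_eq0.
by rewrite addr0 mK0 mSK0.
Qed.

Lemma cesaro_cst_from_ge K c n : 0 <= c -> (K.*2 <= n)%N ->
  c / 2 <= cesaro (cst_from K c) n.
Proof.
move=> c0 Kn; have KSn : (K <= n.+1)%N by move: Kn; rewrite -muln2; lia.
have nK : K%:R * 2 <= n%:R :> R by rewrite -natrM ler_nat muln2.
rewrite /cesaro sum_cst_from -[c *+ _]mulr_natr natrB // mulrCA ler_wpM2l //.
rewrite ler_pdivlMl ?ltr0n // -natr1; lra.
Qed.

Lemma eventually_lt_on_prefix (ys : nat -> nat -> R) :
  (forall n e, 0 < e -> exists K, forall k, (K <= k)%N -> ys k n < e) ->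
  forall N e, 0 < e -> exists K, forall k, (K <= k)%N ->
    forall j, (j < N)%N -> ys k j < e.
Proof.
move=> ys_to0 N e e_gt0; elim: N => [|N [K IH]]; first by exists 0%N.
have [K' HK'] := ys_to0 N e e_gt0.
exists (maxn K K') => k; rewrite geq_max => /andP[Kk K'k] j.
by rewrite ltnS leq_eqVlt => /orP[/eqP ->|jN]; [exact: HK' | exact: IH].
Qed.

Lemma uniform_of_vanishing_dominated (g : nat -> R) (ys : nat -> nat -> R) :
  vanishes g -> (forall k n, ys k n <= `|g n|) ->
  (forall n e, 0 < e -> exists K, forall k, (K <= k)%N -> ys k n < e) ->
  forall e, 0 < e -> exists K, forall k, (K <= k)%N -> forall n, ys k n < e.
Proof.
move=> g_van ys_le ys_to0 e e_gt0.
have [N HN] := g_van e e_gt0; have [K HK] := eventually_lt_on_prefix ys_to0 N e_gt0.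
exists K => k Kk n; have [nN|Nn] := ltnP n N; first exact: HK.
exact: le_lt_trans (ys_le k n) (HN n Nn).
Qed.

End RealSequences.

Lemma order_continuous_CX (R : realType) (mem : (nat -> R) -> Prop) nrm :
  order_continuous mem nrm -> order_continuous (CX_mem mem) (CX_norm nrm).
Proof.
move=> X_oc y ys y_CX ys_bd ys_dec ys_to0.
have absS_ys k : absS (ys k) = ys k.
  by apply: funext => n; rewrite /absS ger0_norm; have [] := ys_bd k n.
apply: (X_oc _ (fun k => cesaro (absS (ys k))) y_CX) => [k n|k n|n e e_gt0] /=.
- rewrite absS_ys; split; first by apply: cesaro_ge0 => j; have [] := ys_bd k j.
  rewrite ger0_norm; last by apply: cesaro_ge0 => j; exact: normr_ge0.
  by apply: ler_cesaro => j _; have [] := ys_bd k j.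
- by rewrite !absS_ys; apply: ler_cesaro => j _.
have [K HK] := eventually_lt_on_prefix ys_to0 n.+1 (divr_gt0 e_gt0 (ltr0n _ 2)).
exists K => k Kk; rewrite absS_ys; apply: (@le_lt_trans _ _ (e / 2)); last by lra.
by apply: cesaro_le_ub => j jn; apply/ltW/HK.
Qed.

Lemma infinite_set_unbounded (P : nat -> Prop) :
  (forall N, exists2 n, (N <= n)%N & P n) -> infinite_set P.
Proof.
move=> P_unbdd /finite_fsetP[X PX].
have [n Xn Pn] := P_unbdd (\max_(i <- X) i).+1.
have nX : n \in X by move: Pn; rewrite PX.
by have := @leq_bigmax_seq _ _ xpredT id n nX isT; rewrite leqNgt Xn.
Qed.

Section Equimeasurable.
Variable R : realType.

Lemma equimeasurable_sym (x y : nat -> R) : equimeasurable x y -> equimeasurable y x.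
Proof. by move=> xy lam lam_gt0; rewrite card_eq_sym; apply: xy. Qed.

Lemma equimeasurable_cst_on (c : R) (P : pred nat) :
  infinite_set [set n | P n] ->
  equimeasurable (fun n => if P n then c else 0) (fun=> c).
Proof.
move=> P_inf lam lam_gt0.
have lt_lam0 : ~ lam < `|0 : R| by rewrite normr0 => /(lt_trans lam_gt0); rewrite ltxx.
have [lam_c|c_lam] := ltP lam `|c|.
  have -> : [set n | lam < `|if P n then c else 0|] = [set n | P n].
    by apply/seteqP; split => n /=; case: (P n).
  suff -> : [set _ : nat | true] = setT by exact: eq_card_nat (countableP _) P_inf.
  by apply/seteqP.
have -> : [set n | lam < `|if P n then c else 0|] = set0.
  by apply/seteqP; split => n //=; case: (P n) => // /(le_lt_trans c_lam); rewrite ltxx.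
have -> : [set _ : nat | false] = set0 by apply/seteqP; split => n.
exact: card_eq00.
Qed.

Lemma equimeasurable_comp (x : nat -> R) (p : nat -> nat) :
  injective p -> (forall i, exists n, p n = i) -> equimeasurable (x \o p) x.
Proof.
move=> p_inj p_surj lam _.
have -> : [set n | lam < `|x n|] = p @` [set n | lam < `|x (p n)|].
  apply/seteqP; split => [n|_ [m xpm <-]] //=.
  by have [m pm] := p_surj n; exists m; rewrite ?pm.
by rewrite card_eq_sym; apply: inj_card_eq => m n _ _; apply: p_inj.
Qed.

End Equimeasurable.

Section NonincreasingRearrangement.
Variables (R : realType) (g : nat -> R).
Hypotheses (g_gt0 : forall n, 0 < g n) (g_vanishes : vanishes g).

Lemma exists_max_notin (s : seq nat) :
  exists m, m \notin s /\ forall j, j \notin s -> g j <= g m.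
Proof.
pose a := (\max_(i <- s) i).+1.
have a_notin : a \notin s.
  by apply/negP => /(@leq_bigmax_seq _ _ xpredT id) /(_ isT); rewrite ltnn.
have [N HN] := g_vanishes (g_gt0 a).
have aN : (a < N)%N.
  by rewrite ltnNge; apply/negP => /HN; rewrite gtr0_norm ?ltxx.
have [m m_notin m_max] := @arg_maxP _ _ _ (Ordinal aN)
  [pred i : 'I_N | val i \notin s] (fun i => g i) a_notin.
exists (val m); split => // j j_notin; have [jN|Nj] := ltnP j N.
  exact: (m_max (Ordinal jN)).
apply: le_trans (m_max (Ordinal aN) a_notin).
by apply/ltW; rewrite -[g j]gtr0_norm ?HN.
Qed.

(* Greedy choice: the n-th term of the rearrangement is a point where g is
   largest among those not chosen yet; as g > 0 vanishes, every point is reached. *)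
Definition max_notin (s : seq nat) : nat :=
  xget 0%N [set m | m \notin s /\ forall j, j \notin s -> g j <= g m].

Lemma max_notinP s : max_notin s \notin s /\ forall j, j \notin s -> g j <= g (max_notin s).
Proof. exact: (xgetPex 0%N (exists_max_notin s)). Qed.

Fixpoint chosen (n : nat) : seq nat :=
  if n is n'.+1 then max_notin (chosen n') :: chosen n' else [::].

Definition rearrangement (n : nat) : nat := max_notin (chosen n).

Lemma mem_chosen n : chosen n =i [seq rearrangement m | m <- iota 0 n].
Proof.
elim: n => [//|n IH] i; rewrite -addn1 iotaD map_cat mem_cat /= inE addn1 orbC.
by rewrite -IH.
Qed.

Lemma rearrangement_inj : injective rearrangement.
Proof.
have neq m n : (m < n)%N -> rearrangement m != rearrangement n.
  move=> mn; apply: contraNneq (max_notinP (chosen n)).1.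
  rewrite -/(rearrangement n) => <-.
  by rewrite mem_chosen map_f // mem_iota.
move=> m n eq_mn; case: (ltngtP m n) => [mn|nm|//].
  by have := neq _ _ mn; rewrite eq_mn eqxx.
by have := neq _ _ nm; rewrite eq_mn eqxx.
Qed.

Lemma rearrangement_surj i : exists n, rearrangement n = i.
Proof.
apply: contrapT => never; have [N HN] := g_vanishes (g_gt0 i).
have lt_N n : (rearrangement n < N)%N.
  rewrite ltnNge; apply/negP => /HN; rewrite gtr0_norm // ltNge.
  apply/negP/negPn; apply: (max_notinP _).2; rewrite mem_chosen.
  by apply/mapP => -[m _ im]; apply: never; exists m.
pose firsts := [seq rearrangement n | n <- iota 0 N.+1].
have firsts_uniq : uniq firsts.
  by rewrite map_inj_uniq ?iota_uniq //; exact: rearrangement_inj.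
have firsts_sub : {subset firsts <= iota 0 N}.
  by move=> _ /mapP[n _ ->]; rewrite mem_iota add0n lt_N.
by have := uniq_leq_size firsts_uniq firsts_sub; rewrite size_map !size_iota ltnn.
Qed.

Lemma rearrangement_nonincreasing n : g (rearrangement n.+1) <= g (rearrangement n).
Proof.
apply: (max_notinP _).2; have := (max_notinP (chosen n.+1)).1.
by rewrite /= inE negb_or => /andP[].
Qed.

End NonincreasingRearrangement.

Lemma nonincreasing_rearrangement (R : realType) (g : nat -> R) :
  (forall n, 0 < g n) -> vanishes g ->
  exists p, [/\ injective p, forall i, exists n, p n = i & forall n, g (p n.+1) <= g (p n)].
Proof.
move=> g_gt0 g_van; exists (rearrangement g); split.
- exact: rearrangement_inj.
- exact: rearrangement_surj.
- exact: rearrangement_nonincreasing.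
Qed.

Section RISpace.
Variables (R : realType) (mem : (nat -> R) -> Prop) (nrm : (nat -> R) -> R).
Hypothesis X_ri : ri_seq_space mem nrm.

Lemma mem_le x y : (forall n, `|x n| <= `|y n|) -> mem y -> mem x.
Proof. by case: X_ri => _ X_ideal _ _ xy /(X_ideal _ _ xy)[]. Qed.

Lemma nrm_le x y : (forall n, `|x n| <= `|y n|) -> mem y -> nrm x <= nrm y.
Proof. by case: X_ri => _ X_ideal _ _ xy /(X_ideal _ _ xy)[]. Qed.

Lemma mem_abs x : mem x -> mem (absS x).
Proof. by apply: mem_le => n; rewrite normr_id. Qed.

Lemma mem_add x y : mem x -> mem y -> mem (fun n => x n + y n).
Proof. by case: X_ri => -[_ [X_add _]] _ _ _; apply: X_add. Qed.

Lemma nrm_gt0 x n : mem x -> x n != 0 -> 0 < nrm x.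
Proof.
case: X_ri => -[_ [_ [_ [nrm_ge0 [nrm_eq0 _]]]]] _ _ _ x_mem xn_neq0.
rewrite lt_def nrm_ge0 // andbT.
by apply: contraNneq xn_neq0 => /(nrm_eq0 _ x_mem) ->.
Qed.

Lemma mem_equimeasurable x y : mem y -> equimeasurable x y -> mem x.
Proof. by case: X_ri => _ _ _ X_rinv y_mem /(X_rinv _ _ y_mem)[]. Qed.

Lemma nrm_equimeasurable x y : mem y -> equimeasurable x y -> nrm x = nrm y.
Proof. by case: X_ri => _ _ _ X_rinv y_mem /(X_rinv _ _ y_mem)[]. Qed.

Lemma mem_cst_of_frequently y (c : R) : mem y -> 0 <= c ->
  (forall N, exists2 n, (N <= n)%N & c <= `|y n|) -> mem (fun=> c).
Proof.
move=> y_mem c_ge0 y_freq.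
have z_mem : mem (fun n => if c <= `|y n| then c else 0).
  by apply: mem_le y_mem => n; case: ifP => [cy|_]; rewrite ?normr0 ?(ger0_norm c_ge0).
apply: mem_equimeasurable z_mem _; apply/equimeasurable_sym/equimeasurable_cst_on.
exact: infinite_set_unbounded.
Qed.

Hypothesis X_cesaro : cesaro_bounded mem nrm.

Lemma mem_CX x : mem x -> CX_mem mem x.
Proof. by case: X_cesaro => X_C _ /mem_abs/X_C. Qed.

Lemma CX_mem_le x y : (forall n, `|x n| <= `|y n|) -> CX_mem mem y -> CX_mem mem x.
Proof.
move=> xy; apply: mem_le => n; have absS_ge0 z j : 0 <= absS z j := normr_ge0 _.
by rewrite !ger0_norm ?cesaro_ge0 //; apply: ler_cesaro => j _; apply: xy.
Qed.

Hypothesis CX_oc : order_continuous (CX_mem mem) (CX_norm nrm).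

Lemma not_mem_cst (c : R) : 0 < c -> ~ mem (fun=> c).
Proof.
move=> c_gt0 c_mem; have c2_gt0 : 0 < c / 2 by rewrite divr_gt0.
have c2_mem : mem (fun=> c / 2).
  by apply: mem_le c_mem => n; rewrite !gtr0_norm //; lra.
have cst_from_bd k n : 0 <= cst_from k c n /\ cst_from k c n <= `|c|.
  by rewrite /cst_from gtr0_norm //; case: ifP => _; rewrite ?lexx ltW.
have cst_from_dec k n : cst_from k.+1 c n <= cst_from k c n.
  rewrite /cst_from; case: (leqP k.+1 n) => [kn|_]; first by rewrite (ltnW kn).
  by case: ifP => _; rewrite ?lexx ?ltW.
have cst_from_to0 n e : 0 < e -> exists K, forall k, (K <= k)%N -> cst_from k c n < e.
  by move=> e_gt0; exists n.+1 => k kn; rewrite /cst_from leqNgt (leq_trans _ kn).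
have [K HK] := CX_oc (mem_CX c_mem) cst_from_bd cst_from_dec cst_from_to0
  (nrm_gt0 (n := 0%N) c2_mem (lt0r_neq0 c2_gt0)).
have := HK K (leqnn K); apply/negP; rewrite -leNgt.
have tail_cst : equimeasurable (cst_from K.*2 (c / 2)) (fun=> c / 2).
  apply: equimeasurable_cst_on; apply: infinite_set_unbounded => N.
  by exists (N + K.*2)%N; rewrite /= ?leq_addr ?leq_addl.
have absS_cst_from : absS (cst_from K c) = cst_from K c.
  by apply: funext => j; rewrite /absS ger0_norm //; have [] := cst_from_bd K j.
have cesaro_cst_from_ge0 n : 0 <= cesaro (cst_from K c) n.
  by apply: cesaro_ge0 => j; have [] := cst_from_bd K j.
rewrite -(nrm_equimeasurable c2_mem tail_cst); apply: nrm_le => [n|]; last first.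
  by apply: CX_mem_le (mem_CX c_mem) => n; have [? ?] := cst_from_bd K n; rewrite ger0_norm.
rewrite absS_cst_from (ger0_norm (cesaro_cst_from_ge0 n)) /cst_from.
case: ifP => [Kn|_]; last by rewrite normr0.
by rewrite gtr0_norm ?cesaro_cst_from_ge // ltW.
Qed.

Lemma mem_vanishes y : mem y -> vanishes y.
Proof.
move=> y_mem e e_gt0; apply: contrapT => not_van.
apply: (not_mem_cst e_gt0); apply: (mem_cst_of_frequently y_mem (ltW e_gt0)) => N.
apply: contrapT => not_freq; apply: not_van; exists N => n Nn.
by rewrite ltNge; apply/negP => e_le; apply: not_freq; exists n.
Qed.

Lemma nrm_min_nonincreasing_to0 (G c : nat -> R) :
  mem G -> (forall n, 0 <= G n) -> (forall n, G n.+1 <= G n) ->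
  (forall k, 0 <= c k) -> (forall k, c k.+1 <= c k) ->
  (forall e, 0 < e -> exists K, forall k, (K <= k)%N -> c k < e) ->
  forall e, 0 < e -> exists K, forall k, (K <= k)%N ->
    nrm (fun n => Num.min (G n) (c k)) < e.
Proof.
move=> G_mem G_ge0 G_noninc c_ge0 c_dec c_to0 e e_gt0.
pose F k n := Num.min (G n) (c k).
have F_ge0 k n : 0 <= F k n by rewrite le_min G_ge0 c_ge0.
have F_bd k n : 0 <= F k n /\ F k n <= `|G n| by rewrite ger0_norm // ge_min lexx.
have F_dec k n : F k.+1 n <= F k n by rewrite le_min !ge_min lexx (c_dec k) orbT.
have F_to0 n e' : 0 < e' -> exists K, forall k, (K <= k)%N -> F k n < e'.
  move=> /c_to0[K HK]; exists K => k /HK; apply: le_lt_trans.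
  by rewrite ge_min lexx orbT.
have [K HK] := CX_oc (mem_CX G_mem) F_bd F_dec F_to0 e_gt0.
exists K => k /HK; apply: le_lt_trans.
have absS_F : absS (F k) = F k by apply: funext => n; rewrite /absS ger0_norm.
apply: nrm_le => [n|]; last first.
  by apply: CX_mem_le (mem_CX G_mem) => n; rewrite !ger0_norm // ge_min lexx.
rewrite absS_F (ger0_norm (F_ge0 k n)) ger0_norm ?cesaro_ge0 //.
by apply: (nonincreasing_le_cesaro (f := F k)) => m; rewrite le_min !ge_min G_noninc lexx orbT.
Qed.

Lemma nrm_uniform_below_nonincreasing_to0 (G : nat -> R) (ys : nat -> nat -> R) :
  mem G -> (forall n, G n.+1 <= G n) ->
  (forall k n, 0 <= ys k n <= G n) -> (forall k n, ys k.+1 n <= ys k n) ->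
  (forall e, 0 < e -> exists K, forall k, (K <= k)%N -> forall n, ys k n < e) ->
  forall e, 0 < e -> exists K, forall k, (K <= k)%N -> nrm (ys k) < e.
Proof.
move=> G_mem G_noninc ys_bd ys_dec ys_unif e e_gt0.
have G_ge0 n : 0 <= G n by case/andP: (ys_bd 0%N n) => /le_trans; apply.
pose c k := sup (range (ys k)).
have ys_le_c k n : ys k n <= c k.
  apply: ub_le_sup; last by exists n.
  exists (G 0%N) => _ [m _ <-]; case/andP: (ys_bd k m) => _ /le_trans; apply.
  exact: nonincreasing_le.
have c_le k b : (forall n, ys k n <= b) -> c k <= b.
  by move=> ys_b; apply: ge_sup => [|_ [m _ <-] //]; exists (ys k 0%N), 0%N.
have c_ge0 k : 0 <= c k by case/andP: (ys_bd k 0%N) => /le_trans + _; apply; apply: ys_le_c.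
have c_dec k : c k.+1 <= c k by apply: c_le => n; apply: le_trans (ys_dec k n) _.
have c_to0 e' : 0 < e' -> exists K, forall k, (K <= k)%N -> c k < e'.
  move=> e'_gt0; have [K HK] := ys_unif _ (divr_gt0 e'_gt0 (ltr0n _ 2)).
  exists K => k /HK ys_lt; apply: (@le_lt_trans _ _ (e' / 2)); last by lra.
  by apply: c_le => n; apply/ltW/ys_lt.
have [K HK] := nrm_min_nonincreasing_to0 G_mem G_ge0 G_noninc c_ge0 c_dec c_to0 e_gt0.
exists K => k /HK; apply: le_lt_trans; apply: nrm_le => [n|]; last first.
  by apply: mem_le G_mem => n; rewrite !ger0_norm ?le_min ?G_ge0 ?c_ge0 // ge_min lexx.
have /andP[ys_ge0 ys_le_G] := ys_bd k n.
by rewrite !ger0_norm ?le_min ?ys_le_G ?ys_le_c ?G_ge0 ?c_ge0.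
Qed.

Lemma order_continuous_of_CX : order_continuous mem nrm.
Proof.
move=> y ys y_mem ys_bd ys_dec ys_to0.
have [x0 [x0_mem x0_neq0]] : exists x, mem x /\ forall n, x n != 0 by case: X_ri.
pose g n := `|y n| + `|x0 n|.
have g_mem : mem g := mem_add (mem_abs y_mem) (mem_abs x0_mem).
have g_gt0 n : 0 < g n by rewrite ltr_wpDl ?normr_gt0.
have ys_le_g k n : ys k n <= `|g n|.
  have [_ ys_le_y] := ys_bd k n.
  by rewrite gtr0_norm // (le_trans ys_le_y) // lerDl.
have [p [p_inj p_surj p_noninc]] :=
  nonincreasing_rearrangement g_gt0 (mem_vanishes g_mem).
have G_mem : mem (g \o p) := mem_equimeasurable g_mem (equimeasurable_comp g p_inj p_surj).
have ysp_bd k n : 0 <= ys k (p n) <= g (p n).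
  by have [-> _] := ys_bd k (p n); rewrite /= -[g _]gtr0_norm ?ys_le_g.
have ysp_unif e : 0 < e -> exists K, forall k, (K <= k)%N -> forall n, ys k (p n) < e.
  move=> /(uniform_of_vanishing_dominated (mem_vanishes g_mem) ys_le_g ys_to0)[K HK].
  by exists K => k /HK.
move=> e /(nrm_uniform_below_nonincreasing_to0 G_mem p_noninc ysp_bd _ ysp_unif)[].
  by move=> k n; apply: ys_dec.
move=> K HK; exists K => k /HK.
have ys_mem : mem (ys k).
  by apply: mem_le y_mem => n; have [ys_ge0 ys_le_y] := ys_bd k n; rewrite ger0_norm.
by rewrite (nrm_equimeasurable ys_mem (equimeasurable_comp (ys k) p_inj p_surj)).
Qed.

End RISpace.

Theorem corollary5p2 (R : realType) (mem : (nat -> R) -> Prop) (nrm : (nat -> R) -> R) :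
  ri_seq_space mem nrm ->
  cesaro_bounded mem nrm ->
  (order_continuous (CX_mem mem) (CX_norm nrm) <-> order_continuous mem nrm).
Proof.
move=> X_ri X_cesaro; split; first exact: order_continuous_of_CX.
exact: order_continuous_CX.
Qed.
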